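(* Let $n\in\mathbb{N}$ and let $a,b$ be positive real numbers. For $p\ge1$ let $D_p(a,b)$ be the $p\times p$ matrix whose $(i,j)$ entry is $-a$ if $i=j$, $b$ if $j=i+1$, $a$ if $i=j+1$, $-b$ if $i=j+2$, and $0$ otherwise, and let $F_p(a,b)=D_p(-a,-b)^t$ (so $F_p(a,b)$ has $(i,j)$ entry $a$ if $i=j$, $-a$ if $j=i+1$, $b$ if $j=i+2$, $-b$ if $i=j+1$, and $0$ otherwise). Set $|D_{-1}(a,b)|=|F_{-1}(a,b)|=0$ and $|D_0(a,b)|=|F_0(a,b)|=1$. Let $E_n(a,b)$ be the $(n+1)\times n$ matrix whose $(i,j)$ entry is $-a$ if $i=j$, $b$ if $j=i+1$, $a$ if $i=j+1$, $-b$ if $i=j+2$, and $0$ otherwise. For $1\le k\le n+1$ let $E_n^k(a,b)$ be the $n\times n$ matrix obtained by deleting the $k$-th row of $E_n(a,b)$. Then $$|E_n^k(a,b)|=|D_{k-1}(a,b)|\,|F_{n-(k-1)}(a,b)|+|D_{k-2}(a,b)|\,|F_{n-k}(a,b)|\,b^2$$ $$=(-1)^{n-k+1}\big(|D_{k-1}(a,b)|\,|D_{n-k+1}(a,b)|-|D_{k-2}(a,b)|\,|D_{n-k}(a,b)|\,b^2\big).$$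
   Context: $|M|$ denotes the determinant of a square matrix $M$. *)

(* Matrices indexed 0-based; the entry conditions
   (i = j, j = i+1, i = j+1, i = j+2) are shift-invariant, so they agree
   with the paper's 1-based description. *)
From mathcomp Require Import all_boot all_order all_algebra.
Set Implicit Arguments. Unset Strict Implicit. Unset Printing Implicit Defensive.
Import Order.TTheory GRing.Theory Num.Theory.
Local Open Scope ring_scope.

Definition Dentry {R : ringType} (a b : R) (i j : nat) : R :=
  if i == j then - a
  else if j == i.+1 then b
  else if i == j.+1 then a
  else if i == j.+2 then - b
  else 0.

Definition Dmat {R : ringType} (p : nat) (a b : R) : 'M[R]_p :=
  \matrix_(i < p, j < p) Dentry a b i j.

Definition Fmat {R : ringType} (p : nat) (a b : R) : 'M[R]_p :=
  (Dmat p (- a) (- b))^T.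

Definition Emat {R : ringType} (n : nat) (a b : R) : 'M[R]_(n.+1, n) :=
  \matrix_(i < n.+1, j < n) Dentry a b i j.

(* E_n^k(a,b): delete the k-th row (1-based, 1 <= k <= n+1) of E_n(a,b) *)
Definition Emat_k {R : ringType} (n k : nat) (a b : R) : 'M[R]_n :=
  row' (inord k.-1 : 'I_n.+1) (Emat n a b).

(* |D_p(a,b)| for integer p, with |D_p| = 0 for p < 0 (only p = -1 is used);
   for p = 0 this is the determinant of the empty matrix, i.e. 1. *)
Definition detD {R : comRingType} (p : int) (a b : R) : R :=
  match p with Posz m => \det (Dmat m a b) | Negz _ => 0 end.

Definition detF {R : comRingType} (p : int) (a b : R) : R :=
  match p with Posz m => \det (Fmat m a b) | Negz _ => 0 end.

From mathcomp Require Import all_boot all_order all_algebra.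
From mathcomp Require Import perm zify ring.
Set Implicit Arguments. Unset Strict Implicit. Unset Printing Implicit Defensive.
Import Order.TTheory GRing.Theory Num.Theory.
Local Open Scope ring_scope.

(* Deleting row k of E_n(a,b) leaves the block matrix with diagonal blocks
   D_{k-1}(a,b) and F_{n-k+1}(a,b), coupled only by the corner entries b (top
   right) and -b (bottom left).  Expanding the determinant linearly in the two
   rows through these corners gives |D_{k-1}| |F_{n-k+1}| + b^2 C_D C_F, where
   C_D, C_F are the cofactors of the diagonal entries adjacent to the corners,
   i.e. |D_{k-2}| and |F_{n-k}|.  Since F_p(a,b) = -D_p(a,b)^T, we have
   |F_p| = (-1)^p |D_p|, which gives the second form. *)

Definition set_row {R : Type} n (X : 'M[R]_n) (i0 : 'I_n) (v : 'rV[R]_n) : 'M[R]_n :=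
  \matrix_(i, j) if i == i0 then v 0 j else X i j.

Section SetRow.
Variables (R : Type) (n : nat) (X : 'M[R]_n) (i0 : 'I_n).

Lemma row_set_row v : row i0 (set_row X i0 v) = v.
Proof. by apply/rowP => j; rewrite !mxE eqxx. Qed.

Lemma row'_set_row v : row' i0 (set_row X i0 v) = row' i0 X.
Proof. by apply/matrixP => i j; rewrite !mxE eq_sym (negPf (neq_lift _ _)). Qed.

Lemma eq_row' (Y : 'M[R]_n) : (forall i, i != i0 -> X i =1 Y i) -> row' i0 X = row' i0 Y.
Proof. by move=> XY; apply/matrixP => i j; rewrite !mxE XY // eq_sym neq_lift. Qed.

End SetRow.

Section DetSetRow.
Variables (R : comRingType) (n : nat) (X : 'M[R]_n).

Lemma det_set_row_delta (i0 j0 : 'I_n) :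
  \det (set_row X i0 (delta_mx 0 j0)) = cofactor X i0 j0.
Proof.
rewrite (expand_det_row _ i0) (bigD1 j0) //= big1 ?addr0.
  rewrite !mxE !eqxx mul1r /cofactor; congr (_ * \det _).
  by apply/matrixP => i j; rewrite !mxE eq_sym (negPf (neq_lift _ _)).
by move=> j /negPf j0'j; rewrite !mxE eqxx j0'j mul0r.
Qed.

Lemma det_set_row0 i0 : \det (set_row X i0 0) = 0.
Proof. by rewrite (expand_det_row _ i0) big1 // => j _; rewrite !mxE eqxx mul0r. Qed.

Lemma det_xrow i1 i2 : i1 != i2 -> \det (xrow i1 i2 X) = - \det X.
Proof. by move=> i12; rewrite xrowE det_mulmx det_perm odd_tperm i12 mulN1r. Qed.

End DetSetRow.

Ltac block_simpl :=
  repeat first [ rewrite block_mxEul | rewrite block_mxEur | rewrite block_mxEdl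
               | rewrite block_mxEdr | rewrite mxE | rewrite eq_lshift
               | rewrite eq_rshift | rewrite eq_lrshift | rewrite eq_rlshift
               | progress simpl ].

Ltac row'_block_entries :=
  let i := fresh "i" in let j := fresh "j" in let ne := fresh "ne" in
  apply: eq_row' => i; case: (split_ordP i) => {}i ->;
  rewrite ?eq_lshift ?eq_rshift ?eq_lrshift ?eq_rlshift => /negPf ne j;
  case: (split_ordP j) => {}j ->; block_simpl; rewrite ?ne /=.

Section CornerCoupledBlock.
Variables (R : comRingType) (p q : nat) (A : 'M[R]_p.+1) (G : 'M[R]_q.+1) (be de : R).

Local Notation T :=
  (block_mx A (be *: delta_mx ord_max ord0) (de *: delta_mx ord0 ord_max) G).
Local Notation r := (lshift q.+1 (ord_max : 'I_p.+1)).
Local Notation s := (rshift p.+1 (ord0 : 'I_q.+1)).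
Local Notation T_r := (set_row T r (delta_mx 0 s)).
Local Notation T_rs := (set_row T_r s (delta_mx 0 r)).

Lemma det_block_corners_split_r : \det T = \det A * \det G + be * \det T_r.
Proof.
rewrite (determinant_multilinear (B := block_mx A 0 (de *: delta_mx ord0 ord_max) G)
  (C := T_r) (i0 := r) (b := 1) (c := be)) ?det_lblock ?mul1r ?row'_set_row //.
  rewrite row_set_row scale1r; apply/rowP => j.
  by case: (split_ordP j) => j' ->; block_simpl; rewrite ?eqxx /= ?mulr0 ?addr0 ?add0r.
by row'_block_entries; rewrite ?mulr0.
Qed.

Lemma det_block_corners_split_s : \det T_r = de * \det T_rs.
Proof.
rewrite (determinant_multilinear
  (B := block_mx (set_row A ord_max 0) (delta_mx ord_max ord0) 0 G)
  (C := T_rs) (i0 := s) (b := 1) (c := de)) ?det_ublock ?det_set_row0 ?mul0r ?mul1r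
  ?add0r ?row'_set_row //.
  rewrite row_set_row scale1r; apply/rowP => j.
  by case: (split_ordP j) => j' ->; block_simpl;
     rewrite ?eqxx /= ?mulr0 ?addr0 ?add0r ?mulr1.
by row'_block_entries; rewrite ?mulr0 //; case: ifP => // ->; rewrite /= mulr0.
Qed.

(* Exchanging rows r and s makes T_rs block diagonal. *)
Lemma det_block_corners_swap :
  \det T_rs = - (cofactor A ord_max ord_max * cofactor G ord0 ord0).
Proof.
have r'_s : r != s by rewrite eq_lrshift.
rewrite -[LHS]opprK -(det_xrow _ r'_s) -!det_set_row_delta -(det_ublock _ 0).
congr (- \det _); apply/matrixP => i j; rewrite mxE.
case: tpermP => [->|->|]; try by case: (split_ordP j) => j' ->; block_simpl; rewrite ?eqxx.
case: (split_ordP i) => i' -> /eqP + /eqP;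
  rewrite ?eq_lshift ?eq_rshift ?eq_lrshift ?eq_rlshift => /negPf ne1 /negPf ne2;
  by case: (split_ordP j) => j' ->; block_simpl; rewrite ?ne1 ?ne2 /= ?mulr0.
Qed.

Lemma det_block_corners :
  \det T = \det A * \det G - be * de * cofactor A ord_max ord_max * cofactor G ord0 ord0.
Proof.
rewrite det_block_corners_split_r det_block_corners_split_s det_block_corners_swap.
by rewrite !mulrN !mulrA.
Qed.

End CornerCoupledBlock.

Ltac Dentry_cases := rewrite /Dentry; repeat (case: eqP => ? /=); try lia.

Section Tridiagonal.
Variables (R : comRingType) (a b : R).

Lemma Emat_k1 n : Emat_k n 1 a b = Fmat n a b.
Proof.
apply/matrixP => i j; rewrite !mxE /= /bump inordK // add1n.
by Dentry_cases; rewrite ?opprK.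
Qed.

Lemma Emat_k_last n : Emat_k n n.+1 a b = Dmat n a b.
Proof.
apply/matrixP => i j; rewrite !mxE /= /bump inordK //=.
by have := ltn_ord i; rewrite ltnNge => /negPf ->.
Qed.

Lemma Emat_k_block p q :
  Emat_k (p.+1 + q.+1) p.+2 a b =
  block_mx (Dmat p.+1 a b) (b *: delta_mx ord_max ord0)
           (- b *: delta_mx ord0 ord_max) (Fmat q.+1 a b).
Proof.
apply/matrixP => i j.
case: (split_ordP i) => {}i ->; case: (split_ordP j) => {}j ->; block_simpl.
all: rewrite /bump inordK; last lia.
all: rewrite -?(inj_eq val_inj) /=.
all: have := ltn_ord i; have := ltn_ord j => hj hi.
all: by Dentry_cases; rewrite ?mulr1 ?mulr0 ?opprK.
Qed.

Lemma cofactor_Dmat_max p : cofactor (Dmat p.+1 a b) ord_max ord_max = \det (Dmat p a b).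
Proof.
rewrite /cofactor addnn -signr_odd odd_double mul1r.
by congr (\det _); apply/matrixP => i j; rewrite !mxE !lift_max.
Qed.

Lemma cofactor_Fmat0 q : cofactor (Fmat q.+1 a b) ord0 ord0 = \det (Fmat q a b).
Proof.
rewrite /cofactor mul1r.
by congr (\det _); apply/matrixP => i j; rewrite !mxE !lift0 /Dentry !eqSS.
Qed.

Lemma det_Fmat m : \det (Fmat m a b) = (-1) ^+ m * \det (Dmat m a b).
Proof.
rewrite /Fmat det_tr -detZ; congr (\det _); apply/matrixP => i j; rewrite !mxE.
by rewrite mulN1r; Dentry_cases; rewrite ?opprK ?oppr0.
Qed.

Lemma det_Emat_k j m :
  \det (Emat_k (j + m)%N j.+1 a b)
    = detD j a b * detF m a b + detD (j%:Z - 1) a b * detF (m%:Z - 1) a b * b ^+ 2.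
Proof.
case: j => [|j].
  by rewrite add0n Emat_k1 /= det_mx00 mul1r !mul0r addr0.
case: m => [|m].
  by rewrite addn0 Emat_k_last /= det_mx00 mulr1 mulr0 mul0r addr0.
rewrite Emat_k_block det_block_corners cofactor_Dmat_max cofactor_Fmat0.
rewrite -(predn_int (ltn0Sn j)) -(predn_int (ltn0Sn m)) /=; ring.
Qed.

Lemma det_Emat_k_signed j m :
  \det (Emat_k (j + m)%N j.+1 a b)
    = (-1) ^+ m * (detD j a b * detD m a b
                   - detD (j%:Z - 1) a b * detD (m%:Z - 1) a b * b ^+ 2).
Proof.
rewrite det_Emat_k; case: m => [|m].
  by rewrite /= !det_mx00; ring.
rewrite -(predn_int (ltn0Sn m)) /= !det_Fmat [(-1) ^+ m.+1]exprS; ring.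
Qed.

End Tridiagonal.

Theorem proposition2p2 (R : realFieldType) (n k : nat) (a b : R)
  (ha : 0 < a) (hb : 0 < b) (hk1 : (1 <= k)%N) (hk2 : (k <= n.+1)%N) :
  \det (Emat_k n k a b)
    = detD (k%:Z - 1) a b * detF (n%:Z - (k%:Z - 1)) a b
      + detD (k%:Z - 2) a b * detF (n%:Z - k%:Z) a b * b ^+ 2
  /\
  \det (Emat_k n k a b)
    = (-1) ^+ (n.+1 - k)%N *
      (detD (k%:Z - 1) a b * detD (n%:Z - k%:Z + 1) a b
       - detD (k%:Z - 2) a b * detD (n%:Z - k%:Z) a b * b ^+ 2).
Proof.
have [j [m [-> ->]]] : exists j m, k = j.+1 /\ n = (j + m)%N.
  by exists k.-1, (n - k.-1)%N; lia.
have -> : j.+1%:Z - 1 = j%:Z by lia.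
have -> : (j + m)%N%:Z - j%:Z = m%:Z by lia.
have -> : j.+1%:Z - 2 = j%:Z - 1 by lia.
have -> : (j + m)%N%:Z - j.+1%:Z = m%:Z - 1 by lia.
rewrite subrK subSS addKn.
exact: conj (det_Emat_k a b j m) (det_Emat_k_signed a b j m).
Qed.
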